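(* Let $B$ be a finite skew brace and $x\in B$. Define $B_0:=\{0,x\}$ and, for $n\ge 1$, $B_n:=\{a\circ b: a,b\in B_{n-1}\}\cup\{\lambda_a(b): a,b\in B_{n-1}\}$. Then $B(x)=\bigcup_n B_n$.
   Context: A skew brace is a triple $(B,+,\circ)$ where $(B,+)$ and $(B,\circ)$ are groups and $a\circ(b+c)=a\circ b-a+a\circ c$ for all $a,b,c$; $0$ is the common identity of both groups. $\lambda_a(b):=-a+a\circ b$. $B(x)$ denotes the smallest subset of $B$ containing $x$ that is a subgroup of both $(B,+)$ and $(B,\circ)$. *)

From mathcomp Require Import all_boot.
Set Implicit Arguments. Unset Strict Implicit. Unset Printing Implicit Defensive.

Record finSkewBrace := FinSkewBrace {
  sb_car :> finType;
  sb_add : sb_car -> sb_car -> sb_car;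
  sb_opp : sb_car -> sb_car;
  sb_zero : sb_car;
  sb_circ : sb_car -> sb_car -> sb_car;
  sb_cinv : sb_car -> sb_car;
  sb_addA : forall a b c, sb_add a (sb_add b c) = sb_add (sb_add a b) c;
  sb_add0r : forall a, sb_add sb_zero a = a;
  sb_addr0 : forall a, sb_add a sb_zero = a;
  sb_addNr : forall a, sb_add (sb_opp a) a = sb_zero;
  sb_addrN : forall a, sb_add a (sb_opp a) = sb_zero;
  sb_circA : forall a b c, sb_circ a (sb_circ b c) = sb_circ (sb_circ a b) c;
  sb_circ0r : forall a, sb_circ sb_zero a = a;
  sb_circr0 : forall a, sb_circ a sb_zero = a;
  sb_circVr : forall a, sb_circ (sb_cinv a) a = sb_zero;
  sb_circrV : forall a, sb_circ a (sb_cinv a) = sb_zero;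
  sb_brace : forall a b c,
    sb_circ a (sb_add b c) = sb_add (sb_add (sb_circ a b) (sb_opp a)) (sb_circ a c)
}.

Section SkewBraceDefs.
Variable B : finSkewBrace.

Definition sb_lambda (a b : B) : B := sb_add (sb_opp a) (sb_circ a b).

Definition is_add_subgroup (S : {set B}) : Prop :=
  sb_zero B \in S /\
  (forall a b, a \in S -> b \in S -> sb_add a b \in S) /\
  (forall a, a \in S -> sb_opp a \in S).

Definition is_circ_subgroup (S : {set B}) : Prop :=
  sb_zero B \in S /\
  (forall a b, a \in S -> b \in S -> sb_circ a b \in S) /\
  (forall a, a \in S -> sb_cinv a \in S).

(* B(x): the smallest subset containing x that is a subgroup of both groups,
   i.e. the intersection of all such subsets. *)
Definition in_gen_sub (x y : B) : Prop :=
  forall S : {set B}, x \in S -> is_add_subgroup S ->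
    is_circ_subgroup S -> y \in S.

Fixpoint Bn (x : B) (n : nat) : {set B} :=
  match n with
  | 0 => [set sb_zero B; x]
  | n'.+1 => [set sb_circ a b | a in Bn x n', b in Bn x n'] :|:
             [set sb_lambda a b | a in Bn x n', b in Bn x n']
  end.

End SkewBraceDefs.

From mathcomp Require Import all_boot.

Set Implicit Arguments.
Unset Strict Implicit.
Unset Printing Implicit Defensive.

(* Since [0 \in B_n] and [a = a o 0], the sets [B_n] form an increasing chain,
   which stabilises in the finite brace at some [B_N], closed under [o] and
   [lambda].  For [a \in B_N] the injective maps [a o -] and [lambda_a] then
   permute [B_N], so [B_N] contains [a^-1] (the preimage of [0] under [a o -]),
   [-a = lambda_a (a^-1)] and [a + b = a o c] where [lambda_a c = b]; thus
   [B_N] is a subgroup of both groups.  Conversely any subgroup of both groups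
   is closed under [lambda_a b = -a + a o b], hence contains every [B_n]. *)

Lemma chain_stabilizes (T : finType) (A : nat -> {set T}) :
  (forall n, A n \subset A n.+1) -> exists n, A n.+1 = A n.
Proof.
move=> sAS.
have [/existsP[n /eqP] | /existsPn strict] :=
  boolP [exists n : 'I_#|T|.+1, A n.+1 == A n]; first by exists n.
suff card_ge n : n <= #|T|.+1 -> n <= #|A n|.
  by have := leq_trans (card_ge _ (leqnn _)) (max_card _); rewrite ltnn.
elim: n => // n IH lt_n_T.
have /proper_card : A n \proper A n.+1.
  by rewrite properEneq eq_sym sAS (strict (Ordinal lt_n_T)).
exact: leq_ltn_trans (IH (ltnW lt_n_T)).
Qed.

Lemma inj_closed_onto (T : finType) (f : T -> T) (A : {set T}) :
  injective f -> {in A, forall a, f a \in A} ->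
  forall b, b \in A -> exists2 a, a \in A & f a = b.
Proof.
move=> f_inj fA b Ab.
have sfAA : f @: A \subset A by apply/subsetP=> _ /imsetP[a Aa ->]; exact: fA.
have /imsetP[a Aa ->] : b \in f @: A.
  by rewrite (subset_cardP (card_imset A f_inj) sfAA).
by exists a.
Qed.

Section SkewBrace.
Variable B : finSkewBrace.

Lemma sb_circ_inj (a : B) : injective (sb_circ a).
Proof.
move=> u v eq_uv.
by rewrite -(sb_circ0r u) -(sb_circ0r v) -(sb_circVr a) -!sb_circA eq_uv.
Qed.

Lemma sb_addr_lambda (a c : B) : sb_add a (sb_lambda a c) = sb_circ a c.
Proof. by rewrite /sb_lambda sb_addA sb_addrN sb_add0r. Qed.

Lemma sb_lambda_inj (a : B) : injective (sb_lambda a).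
Proof.
move=> u v eq_uv; apply: (@sb_circ_inj a).
by rewrite -!sb_addr_lambda eq_uv.
Qed.

Lemma sb_lambda_cinv (a : B) : sb_lambda a (sb_cinv a) = sb_opp a.
Proof. by rewrite /sb_lambda sb_circrV sb_addr0. Qed.

Section CircLambdaClosed.
Variable S : {set B}.
Hypothesis S0 : sb_zero B \in S.
Hypothesis Scirc : forall a b, a \in S -> b \in S -> sb_circ a b \in S.
Hypothesis Slambda : forall a b, a \in S -> b \in S -> sb_lambda a b \in S.

Lemma closed_cinv a : a \in S -> sb_cinv a \in S.
Proof.
move=> Sa.
have [b Sb a_b_0] := inj_closed_onto (@sb_circ_inj a) (fun=> Scirc Sa) S0.
suff -> : sb_cinv a = b by [].
by apply: (@sb_circ_inj a); rewrite a_b_0 sb_circrV.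
Qed.

Lemma closed_opp a : a \in S -> sb_opp a \in S.
Proof. by move=> Sa; rewrite -sb_lambda_cinv Slambda ?closed_cinv. Qed.

Lemma closed_add a b : a \in S -> b \in S -> sb_add a b \in S.
Proof.
move=> Sa Sb.
have [c Sc <-] := inj_closed_onto (@sb_lambda_inj a) (fun=> Slambda Sa) Sb.
by rewrite sb_addr_lambda Scirc.
Qed.

Lemma closed_add_subgroup : is_add_subgroup S.
Proof. by split; [|split]; [| exact: closed_add | exact: closed_opp]. Qed.

Lemma closed_circ_subgroup : is_circ_subgroup S.
Proof. by split; [|split]; [| exact: Scirc | exact: closed_cinv]. Qed.

End CircLambdaClosed.

Lemma subgroup_lambda (S : {set B}) a b :
  is_add_subgroup S -> is_circ_subgroup S -> a \in S -> b \in S ->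
  sb_lambda a b \in S.
Proof.
by move=> [_ [Sadd Sopp]] [_ [Scirc _]] Sa Sb; rewrite Sadd ?Sopp ?Scirc.
Qed.

Variable x : B.

Lemma Bn_zero n : sb_zero B \in Bn x n.
Proof.
elim: n => [|n IH] /=; first by rewrite !inE eqxx.
by rewrite inE -{1}[sb_zero B](sb_circ0r (sb_zero B)) imset2_f.
Qed.

Lemma Bn_subS n : Bn x n \subset Bn x n.+1.
Proof.
apply/subsetP=> y Bn_y /=.
by apply/setUP; left; rewrite -(sb_circr0 y) imset2_f ?Bn_zero.
Qed.

Lemma Bn_x n : x \in Bn x n.
Proof.
elim: n => [|n IH]; first by rewrite !inE eqxx orbT.
exact: subsetP (Bn_subS n) x IH.
Qed.

Lemma Bn_fixpoint_subgroup N : Bn x N.+1 = Bn x N ->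
  is_add_subgroup (Bn x N) /\ is_circ_subgroup (Bn x N).
Proof.
move=> BnN.
have Bcirc a b : a \in Bn x N -> b \in Bn x N -> sb_circ a b \in Bn x N.
  by move=> Ba Bb; rewrite -BnN inE imset2_f.
have Blambda a b : a \in Bn x N -> b \in Bn x N -> sb_lambda a b \in Bn x N.
  by move=> Ba Bb; rewrite -BnN inE orbC imset2_f.
have B0 := Bn_zero N.
split; first exact: closed_add_subgroup B0 Bcirc Blambda.
exact: closed_circ_subgroup B0 Bcirc.
Qed.

Lemma Bn_sub_subgroup (S : {set B}) n : x \in S ->
  is_add_subgroup S -> is_circ_subgroup S -> Bn x n \subset S.
Proof.
move=> Sx addS circS; have [_ [Scirc _]] := circS.
elim: n => [|n IH] /=.
  by apply/subsetP=> y; rewrite !inE => /orP[] /eqP ->; [case: addS|].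
by apply/subsetP=> y /setUP[] /imset2P[a b Ba Bb ->];
  rewrite ?Scirc ?subgroup_lambda ?(subsetP IH).
Qed.

End SkewBrace.

Theorem mainTheorem17 (B : finSkewBrace) (x : B) :
  forall y : B, in_gen_sub x y <-> exists n : nat, y \in Bn x n.
Proof.
move=> y; split=> [gen_y | [n Bn_y] S Sx addS circS].
- have [N BnN] := chain_stabilizes (@Bn_subS B x).
  have [addBN circBN] := Bn_fixpoint_subgroup BnN.
  by exists N; apply: gen_y; rewrite ?Bn_x.
- exact: subsetP (Bn_sub_subgroup n Sx addS circS) y Bn_y.
Qed.
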